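(* Let $c>0$ and for integers $d\ge0$ let $\lambda_d=I_d(c)/I_0(c)$. Then $$\frac{9}{2\pi^2}\sum_{\substack{d\ge1\\ d\not\equiv0 \ (\mathrm{mod}\ 3)}}\frac{\lambda_d}{d^2}>\frac{4}{\pi^2}\sum_{\substack{d\ge1\\ d\text{ odd}}}\frac{\lambda_d}{d^2}.$$ Equivalently, for the spherical noise operator $U_g$ on $S^1$ with parameter $c$, a partition of $S^1$ into three arcs of angle $2\pi/3$ has strictly larger value of $\sum_i[\int_{S^1}1_{H_i}U_g1_{H_i}\,d\sigma-\sigma(H_i)^2]$ than a partition into two arcs of angle $\pi$.
   Context: $I_\alpha(x)=\frac{(x/2)^\alpha}{\sqrt\pi\,\Gamma(\alpha+1/2)}\int_{-1}^1e^{xt}(1-t^2)^{\alpha-1/2}\,dt$ is the modified Bessel function of the first kind. In the paper $c=\rho rs/(1-\rho^2)$ with $0<\rho<1$, $r,s>0$. $\sigma$ is normalized Haar measure on $S^1$, $g(t)=e^{ct}/(\frac1\pi\int_0^\pi e^{c\cos\theta}d\theta)$, $U_gu(x)=\int_{S^1}g(\langle x,y\rangle)u(y)\,d\sigma(y)$; $\lambda_d$ are the Fourier multipliers of $U_g$. *)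

From Stdlib Require Import Reals.
From Coquelicot Require Import Coquelicot.
Open Scope R_scope.

Definition Gamma (s : R) : R :=
  RInt_gen (fun t => Rpower t (s - 1) * exp (- t)) (at_right 0) (Rbar_locally p_infty).

(* Modified Bessel function of the first kind, via the integral representation
   I_a(x) = (x/2)^a / (sqrt pi Gamma(a+1/2)) int_{-1}^{1} e^{xt} (1-t^2)^{a-1/2} dt,
   specialised to nonnegative integer order d and x > 0 (so (x/2)^d is the nat power).
   The integral is improper at t = -1, 1 (needed for d = 0). *)
Definition besselI (d : nat) (x : R) : R :=
  (x / 2) ^ d / (sqrt PI * Gamma (INR d + / 2)) *
  RInt_gen (fun t => exp (x * t) * Rpower (1 - t ^ 2) (INR d - / 2))
           (at_right (-1)) (at_left 1).

Definition lambda (c : R) (d : nat) : R := besselI d c / besselI 0 c.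

From Stdlib Require Import Reals Lra Lia Classical.
From Coquelicot Require Import Coquelicot.
Open Scope R_scope.

(* After multiplying by pi^2 it suffices that the terms
     C_d = 9/2 [3 does not divide d] a_d - 4 [d odd] a_d
   have a positive sum.  Grouped by residues modulo 6, a block of C reads
     1/2 a_{6n+1} + 9/2 a_{6n+2} - 4 a_{6n+3} + 9/2 a_{6n+4} + 1/2 a_{6n+5},
   which is at least a_{6n+1}/2 as soon as lambda is nonnegative and nonincreasing;
   the first block then gives the strict inequality (section ArcSums).

   The analytic input, I_d(c) > 0 and I_{d+1}(c) <= I_d(c), comes from the integral
   representation: with J_d = int_{-1}^{1} e^{ct} (1-t^2)^{d-1/2} dt, integration by parts
   gives Gamma(d + 3/2) = (d + 1/2) Gamma(d + 1/2) and
   c J_{d+1} = (2d+1) int t e^{ct} (1-t^2)^{d-1/2} dt <= (2d+1) J_d. *)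

Lemma is_series_telescoping (u : nat -> R) :
  is_lim_seq u 0 -> is_series (fun n => u n - u (S n)) (u O).
Proof.
  intros Hu.
  assert (Hsum : forall N, sum_n (fun n => u n - u (S n)) N = u O - u (S N)).
  { induction N as [|N IH].
    - now rewrite sum_O.
    - rewrite sum_Sn, IH. unfold plus; simpl. lra. }
  apply (filterlim_ext (fun N => u O - u (S N))); [intros N; now rewrite Hsum|].
  change (is_lim_seq (fun N => u O - u (S N)) (u O)).
  replace (Finite (u O)) with (Rbar_minus (u O) 0) by (simpl; f_equal; ring).
  apply is_lim_seq_minus'; [apply is_lim_seq_const|].
  now apply (is_lim_seq_incr_1 u 0).
Qed.

Lemma ex_series_inv_square (u : nat -> R) (K : R) :
  (forall d, (1 <= d)%nat -> Rabs (u d) <= K / INR d ^ 2) -> ex_series u.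
Proof.
  intros Hu.
  set (v := fun n => / INR (S n) - / INR (S (S n))).
  assert (Hv : ex_series v).
  { exists (/ INR 1). apply is_series_telescoping.
    replace (Finite 0) with (Rbar_inv p_infty) by reflexivity.
    apply is_lim_seq_inv; [|discriminate].
    apply (is_lim_seq_incr_1 INR), is_lim_seq_INR. }
  apply ex_series_incr_1.
  apply (ex_series_le (K := R_AbsRing) (V := R_CompleteNormedModule) _ (fun n => 2 * K * v n));
    [|exact (ex_series_scal_l (2 * K) v Hv)].
  intros n. change (norm (u (S n))) with (Rabs (u (S n))).
  assert (Hn : 1 <= INR (S n)) by (apply (le_INR 1); lia).
  eapply Rle_trans; [apply Hu; lia|].
  assert (HK : 0 <= K).
  { specialize (Hu (S n) ltac:(lia)). pose proof (Rabs_pos (u (S n))).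
    assert (0 < / INR (S n) ^ 2) by (apply Rinv_0_lt_compat, pow_lt; lra).
    unfold Rdiv in Hu. nra. }
  unfold v. rewrite (S_INR (S n)). set (x := INR (S n)) in *.
  replace (2 * K * (/ x - / (x + 1))) with (K * (2 / (x * (x + 1)))) by (field; lra).
  unfold Rdiv at 1. apply Rmult_le_compat_l; [lra|].
  apply (Rmult_le_reg_r (x ^ 2 * (x * (x + 1)))); [nra|].
  field_simplify; nra.
Qed.

Lemma sum_n_split (u : nat -> R) (n m : nat) :
  sum_n u (n + S m) = sum_n u n + sum_n (fun r => u (S n + r)%nat) m.
Proof.
  induction m as [|m IH].
  - rewrite Nat.add_1_r, sum_Sn, sum_O, Nat.add_0_r. reflexivity.
  - rewrite Nat.add_succ_r, sum_Sn, IH, sum_Sn.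
    replace (S n + S m)%nat with (S (n + S m)) by lia.
    unfold plus; simpl. ring.
Qed.

Lemma sum_n_blocks (u : nat -> R) (m N : nat) :
  sum_n (fun n => sum_n (fun r => u (S m * n + r)%nat) m) N = sum_n u (S m * N + m).
Proof.
  induction N as [|N IH].
  - rewrite sum_O, Nat.mul_0_r. reflexivity.
  - rewrite sum_Sn, IH.
    replace (S m * S N + m)%nat with (S m * N + m + S m)%nat by lia.
    rewrite sum_n_split. unfold plus; simpl. f_equal. apply sum_n_ext. intros r. f_equal. lia.
Qed.

Lemma is_series_blocks (u : nat -> R) (m : nat) (s : R) :
  is_series u s -> is_series (fun n => sum_n (fun r => u (S m * n + r)%nat) m) s.
Proof.
  intros Hu. unfold is_series.
  apply (filterlim_ext (fun N => sum_n u (S m * N + m))).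
  { intros N. now rewrite sum_n_blocks. }
  apply (is_lim_seq_subseq (sum_n u) s (fun N => S m * N + m)%nat); [|exact Hu].
  intros P [N HN]. exists N. intros n Hn. apply HN. nia.
Qed.

Lemma is_series_ge_head (u : nat -> R) (s : R) :
  (forall n, 0 <= u n) -> is_series u s -> u O <= s.
Proof.
  intros Hpos Hu.
  assert (Hpart : forall N, u O <= sum_n u N).
  { induction N as [|N IH]; [rewrite sum_O; lra|].
    rewrite sum_Sn. unfold plus; simpl. specialize (Hpos (S N)). lra. }
  apply (is_lim_seq_le (fun _ => u O) (sum_n u) (u O) s Hpart);
    [apply is_lim_seq_const|exact Hu].
Qed.

Definition weighted (l : nat -> R) (d : nat) : R := l d / INR d ^ 2.
Definition three_arc_term (l : nat -> R) (d : nat) : R :=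
  if orb (Nat.eqb d 0) (Nat.eqb (Nat.modulo d 3) 0) then 0 else weighted l d.
Definition two_arc_term (l : nat -> R) (d : nat) : R :=
  if Nat.odd d then weighted l d else 0.

Section ArcSums.

Variable l : nat -> R.
Hypothesis l_nonneg : forall d, 0 <= l d.
Hypothesis l_decr : forall d, l (S d) <= l d.

(* a_d >= 0 (with a_0 = l_0 / 0 = 0). *)
Lemma weighted_nonneg d : 0 <= weighted l d.
Proof.
  unfold weighted, Rdiv. apply Rmult_le_pos; [apply l_nonneg|].
  destruct d as [|d]; [simpl; rewrite Rmult_0_l, Rinv_0; lra|].
  apply Rlt_le, Rinv_0_lt_compat, pow_lt, lt_0_INR. lia.
Qed.

Lemma weighted_decr d : (1 <= d)%nat -> weighted l (S d) <= weighted l d.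
Proof.
  intros Hd. unfold weighted, Rdiv. rewrite S_INR.
  assert (Hx : 1 <= INR d) by (apply (le_INR 1); lia).
  apply Rmult_le_compat; [apply l_nonneg| |apply l_decr|].
  - apply Rlt_le, Rinv_0_lt_compat, pow_lt. lra.
  - apply Rinv_le_contravar; [apply pow_lt; lra|]. nra.
Qed.

Lemma weighted_bound d : (1 <= d)%nat -> Rabs (weighted l d) <= l O / INR d ^ 2.
Proof.
  intros Hd. rewrite Rabs_pos_eq by apply weighted_nonneg.
  assert (Hl0 : forall k, l k <= l O).
  { induction k as [|k IH]; [lra|]. specialize (l_decr k). lra. }
  unfold weighted, Rdiv. apply Rmult_le_compat_r; [|apply Hl0].
  apply Rlt_le, Rinv_0_lt_compat, pow_lt, lt_0_INR. lia.
Qed.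

Lemma ex_series_three_arc : ex_series (three_arc_term l).
Proof.
  apply (ex_series_inv_square _ (l O)). intros d Hd.
  pose proof (weighted_bound d Hd) as Hw.
  unfold three_arc_term. destruct (_ || _)%bool; [|exact Hw].
  rewrite Rabs_R0. exact (Rle_trans _ _ _ (Rabs_pos _) Hw).
Qed.

Lemma ex_series_two_arc : ex_series (two_arc_term l).
Proof.
  apply (ex_series_inv_square _ (l O)). intros d Hd.
  pose proof (weighted_bound d Hd) as Hw.
  unfold two_arc_term. destruct (Nat.odd d); [exact Hw|].
  rewrite Rabs_R0. exact (Rle_trans _ _ _ (Rabs_pos _) Hw).
Qed.

Lemma three_arc_term_shift n r :
  three_arc_term l (6 * n + r) = if Nat.eqb (r mod 3) 0 then 0 else weighted l (6 * n + r).
Proof.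
  unfold three_arc_term.
  replace ((6 * n + r) mod 3)%nat with (r mod 3)%nat
    by (replace (6 * n + r)%nat with (r + 2 * n * 3)%nat by lia; now rewrite Nat.Div0.mod_add).
  destruct (Nat.eqb (r mod 3) 0) eqn:Hr; [now rewrite Bool.orb_true_r|].
  rewrite Bool.orb_false_r.
  destruct (Nat.eqb (6 * n + r) 0) eqn:Hd; [|reflexivity].
  apply Nat.eqb_eq in Hd. replace r with O in Hr by lia. discriminate.
Qed.

Lemma two_arc_term_shift n r :
  two_arc_term l (6 * n + r) = if Nat.odd r then weighted l (6 * n + r) else 0.
Proof.
  unfold two_arc_term. rewrite Nat.odd_add.
  replace (6 * n)%nat with (2 * (3 * n))%nat by lia. now rewrite Nat.odd_mul.
Qed.

Definition arc_difference (d : nat) : R := 9 / 2 * three_arc_term l d - 4 * two_arc_term l d.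

(* A block of six consecutive terms, 1/2 a_1 + 9/2 a_2 - 4 a_3 + 9/2 a_4 + 1/2 a_5 (shifted
   by 6n), is at least a_{6n+1} / 2 because a_{6n+3} <= a_{6n+2}. *)
Lemma arc_difference_block n :
  / 2 * weighted l (6 * n + 1) <= sum_n (fun r => arc_difference (6 * n + r)) 5.
Proof.
  rewrite !sum_Sn, sum_O. change plus with Rplus.
  unfold arc_difference. rewrite !three_arc_term_shift, !two_arc_term_shift.
  cbn [Nat.modulo Nat.divmod Nat.sub snd Nat.eqb Nat.odd Nat.even negb].
  pose proof (weighted_decr (6 * n + 2) ltac:(lia)) as Hdecr.
  replace (S (6 * n + 2)) with (6 * n + 3)%nat in Hdecr by lia.
  pose proof (weighted_nonneg (6 * n + 2)). pose proof (weighted_nonneg (6 * n + 4)).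
  pose proof (weighted_nonneg (6 * n + 5)).
  lra.
Qed.

Hypothesis l_one_pos : 0 < l 1%nat.

(* The difference series, grouped in blocks of six, has nonnegative blocks, the first of
   which is at least l_1 / 2 > 0. *)
Lemma arc_sums_inequality :
  4 * Series (two_arc_term l) < 9 / 2 * Series (three_arc_term l).
Proof.
  assert (Hdiff : is_series arc_difference
                    (9 / 2 * Series (three_arc_term l) - 4 * Series (two_arc_term l))).
  { apply (is_series_minus (fun d => 9 / 2 * three_arc_term l d) (fun d => 4 * two_arc_term l d));
      apply (is_series_scal_l (K := R_AbsRing) (V := R_NormedModule)), Series_correct.
    - apply ex_series_three_arc.
    - apply ex_series_two_arc. }
  pose proof (is_series_blocks _ 5 _ Hdiff) as Hblocks.
  apply is_series_ge_head in Hblocks.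
  - pose proof (arc_difference_block 0) as Hfirst.
    replace (weighted l (6 * 0 + 1)) with (l 1%nat) in Hfirst
      by (unfold weighted; simpl; field).
    lra.
  - intros n. eapply Rle_trans; [|apply arc_difference_block].
    pose proof (weighted_nonneg (6 * n + 1)). lra.
Qed.

End ArcSums.

Lemma monotone_bounded_limit (F : (R -> Prop) -> Prop) {FF : Filter F}
    (D : R -> Prop) (phi : R -> R) (y0 M : R) :
  D y0 -> (forall x, D x -> phi x <= M) ->
  (forall y, D y -> F (fun x => D x /\ phi y <= phi x)) ->
  exists L, (forall x, D x -> phi x <= L) /\ filterlim phi F (locally L).
Proof.
  intros Dy0 Hbound Hincr.
  destruct (completeness (fun r => exists x, D x /\ r = phi x)) as [L [Hub Hlub]].
  - exists M. intros r [x [Dx ->]]. now apply Hbound.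
  - exists (phi y0), y0. now split.
  - assert (Hle : forall x, D x -> phi x <= L) by (intros x Dx; apply Hub; now exists x).
    exists L. split; [exact Hle|].
    apply filterlim_locally. intros eps.
    assert (Hnear : exists y, D y /\ L - eps < phi y).
    { apply NNPP. intros Hnone.
      assert (L <= L - eps); [|destruct eps; simpl in *; lra].
      apply Hlub. intros r [x [Dx ->]].
      apply Rnot_lt_le. intros Hlt. apply Hnone. now exists x. }
    destruct Hnear as [y [Dy Hy]].
    eapply filter_imp; [|exact (Hincr y Dy)]. intros x [Dx Hx].
    specialize (Hle x Dx). pose proof (cond_pos eps).
    change (Rabs (phi x - L) < eps). apply Rabs_def1; lra.
Qed.

Record interval_ends (Fa Fb : (R -> Prop) -> Prop) (P : R -> Prop) : Prop := {
  ends_convex : forall x y z, P x -> P z -> x <= y <= z -> P y;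
  ends_open : forall x, P x -> locally x P;
  ends_left : forall y, P y -> Fa (fun x => P x /\ x <= y);
  ends_right : forall y, P y -> Fb (fun x => P x /\ y <= x) }.

Section ImproperIntegral.

Variables (Fa Fb : (R -> Prop) -> Prop).
Context {FFa : Filter Fa} {FFb : Filter Fb}.
Variables (P : R -> Prop) (x0 : R).
Hypothesis P_ends : interval_ends Fa Fb P.
Hypothesis P_x0 : P x0.

Lemma segment_in_interval a b x : P a -> P b -> Rmin a b <= x <= Rmax a b -> P x.
Proof.
  intros Pa Pb Hx. destruct (Rle_dec a b).
  - rewrite Rmin_left, Rmax_right in Hx by lra. now apply (ends_convex _ _ _ P_ends a x b).
  - rewrite Rmin_right, Rmax_left in Hx by lra. now apply (ends_convex _ _ _ P_ends b x a).
Qed.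

Lemma eventually_segment_in_interval :
  filter_prod Fa Fb (fun ab => forall x, Rmin (fst ab) (snd ab) <= x <= Rmax (fst ab) (snd ab) -> P x).
Proof.
  apply (Filter_prod _ _ _ _ _ (ends_left _ _ _ P_ends x0 P_x0) (ends_right _ _ _ P_ends x0 P_x0)).
  intros a b [Pa _] [Pb _] x. now apply segment_in_interval.
Qed.

Lemma ex_RInt_in_interval (f : R -> R) a b :
  (forall x, P x -> continuous f x) -> P a -> P b -> ex_RInt f a b.
Proof.
  intros Hf Pa Pb. apply (ex_RInt_continuous (V := R_CompleteNormedModule)).
  intros x Hx. apply Hf. now apply (segment_in_interval a b).
Qed.

Lemma improper_FTC (F f : R -> R) (la lb : R) :
  (forall x, P x -> is_derive F x (f x)) -> (forall x, P x -> continuous f x) ->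
  filterlim F Fa (locally la) -> filterlim F Fb (locally lb) ->
  is_RInt_gen f Fa Fb (lb - la).
Proof.
  intros HF Hf Ha Hb.
  apply (is_RInt_gen_ext (Derive F)).
  - eapply filter_imp; [|exact eventually_segment_in_interval]; cbv beta.
    intros ab Hab x Hx. apply is_derive_unique, HF, Hab. lra.
  - apply is_RInt_gen_Derive; [| |exact Ha|exact Hb];
      eapply filter_imp; try exact eventually_segment_in_interval; cbv beta;
      intros ab Hab x Hx; specialize (Hab x Hx).
    + exists (f x). now apply HF.
    + apply (continuous_ext_loc _ f); [|now apply Hf].
      eapply filter_imp; [|exact (ends_open _ _ _ P_ends x Hab)].
      intros y Py. symmetry. now apply is_derive_unique, HF.
Qed.

Section Comparison.

Variables (f g G : R -> R) (M : R).
Hypothesis f_cont : forall x, P x -> continuous f x.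
Hypothesis g_cont : forall x, P x -> continuous g x.
Hypothesis f_dominated : forall x, P x -> 0 < f x <= g x.
Hypothesis G_primitive : forall x, P x -> is_derive G x (g x).
Hypothesis G_bounded : forall x, P x -> Rabs (G x) <= M.

(* 0 <= int_a^b f <= int_a^b g = G b - G a <= 2 M. *)
Lemma partial_integral_bounds a b :
  P a -> P b -> a <= b -> 0 <= RInt f a b <= 2 * M.
Proof.
  intros Pa Pb Hab.
  assert (Hdom : forall x, a < x < b -> 0 < f x <= g x)
    by (intros x Hx; apply f_dominated, (ends_convex _ _ _ P_ends a x b); auto; lra).
  assert (HgG : RInt g a b = G b - G a).
  { apply is_RInt_unique, (is_RInt_derive (V := R_CompleteNormedModule));
      intros x Hx; [apply G_primitive|apply g_cont]; now apply (segment_in_interval a b). }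
  split.
  - apply RInt_ge_0; [exact Hab|now apply ex_RInt_in_interval|].
    intros x Hx. apply Rlt_le, Hdom, Hx.
  - apply Rle_trans with (RInt g a b).
    + apply RInt_le; [exact Hab|now apply ex_RInt_in_interval..|].
      intros x Hx. apply Hdom, Hx.
    + rewrite HgG. pose proof (G_bounded a Pa). pose proof (G_bounded b Pb).
      pose proof (Rle_abs (G b)). pose proof (Rabs_maj2 (G a)). lra.
Qed.

(* Both partial integrals x |-> int_x0^x f and x |-> int_x^x0 f increase towards the ends
   and are bounded, hence converge; the improper integral is the sum of their limits. *)
Lemma improper_integral_exists (x1 : R) :
  P x1 -> x0 < x1 -> exists l, is_RInt_gen f Fa Fb l /\ 0 < l.
Proof.
  intros P_x1 H01.
  assert (Hint : forall a b, P a -> P b -> ex_RInt f a b)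
    by (intros a b; now apply ex_RInt_in_interval).
  assert (Hchasles : forall a b c, P a -> P b -> P c -> RInt f a c = RInt f a b + RInt f b c)
    by (intros a b c Pa Pb Pc; symmetry;
        apply (RInt_Chasles (V := R_CompleteNormedModule)); now apply Hint).
  destruct (monotone_bounded_limit Fb (fun x => P x /\ x0 <= x) (fun x => RInt f x0 x) x0 (2 * M))
    as [Lb [HLb_ub HLb]].
  { split; [exact P_x0|lra]. }
  { intros x [Px Hx]. now apply partial_integral_bounds. }
  { intros y [Py Hy]. eapply filter_imp; [|exact (ends_right _ _ _ P_ends y Py)].
    intros x [Px Hx]. split; [split; [exact Px|lra]|].
    rewrite (Hchasles x0 y x P_x0 Py Px). pose proof (partial_integral_bounds y x Py Px Hx). lra. }
  destruct (monotone_bounded_limit Fa (fun x => P x /\ x <= x0) (fun x => RInt f x x0) x0 (2 * M))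
    as [La [HLa_ub HLa]].
  { split; [exact P_x0|lra]. }
  { intros x [Px Hx]. now apply partial_integral_bounds. }
  { intros y [Py Hy]. eapply filter_imp; [|exact (ends_left _ _ _ P_ends y Py)].
    intros x [Px Hx]. split; [split; [exact Px|lra]|].
    rewrite (Hchasles x y x0 Px Py P_x0). pose proof (partial_integral_bounds x y Px Py Hx). lra. }
  exists (Lb - - La). split.
  - apply (improper_FTC (fun x => RInt f x0 x)); [|exact f_cont| |exact HLb].
    + intros x Px. apply (is_derive_RInt f _ x0 x); [|now apply f_cont].
      eapply filter_imp; [|exact (ends_open _ _ _ P_ends x Px)].
      intros y Py. apply (RInt_correct (V := R_CompleteNormedModule)). now apply Hint.
    + apply (filterlim_ext_loc (fun x => - RInt f x x0)).
      * eapply filter_imp; [|exact (ends_left _ _ _ P_ends x0 P_x0)].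
        intros x [Px _]. apply (opp_RInt_swap (V := R_CompleteNormedModule)). now apply Hint.
      * eapply filterlim_comp; [exact HLa|].
        exact (filterlim_opp (K := R_AbsRing) (V := R_NormedModule) La).
  - assert (Hpos : 0 < RInt f x0 x1).
    { apply RInt_gt_0; [exact H01| |]; intros x Hx;
        [apply f_dominated|apply f_cont]; apply (ends_convex _ _ _ P_ends x0 x x1); auto; lra. }
    assert (Hzero : 0 <= La).
    { replace 0 with (RInt f x0 x0) by exact (RInt_point (V := R_CompleteNormedModule) x0 f).
      apply HLa_ub. split; [exact P_x0|lra]. }
    pose proof (HLb_ub x1 (conj P_x1 (Rlt_le _ _ H01))). lra.
Qed.

End Comparison.

End ImproperIntegral.

Lemma continuous_of_ex_derive (f : R -> R) x : ex_derive f x -> continuous f x.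
Proof. apply (ex_derive_continuous (K := R_AbsRing) (V := R_NormedModule)). Qed.

Lemma limit_at_right_of_continuous (f : R -> R) a l :
  continuous f a -> f a = l -> filterlim f (at_right a) (locally l).
Proof. intros Hf <-. eapply filterlim_filter_le_1; [apply filter_le_within|exact Hf]. Qed.

Lemma limit_at_left_of_continuous (f : R -> R) a l :
  continuous f a -> f a = l -> filterlim f (at_left a) (locally l).
Proof. intros Hf <-. eapply filterlim_filter_le_1; [apply filter_le_within|exact Hf]. Qed.

Lemma at_right_segment a y : a < y -> at_right a (fun x => a < x /\ x <= y).
Proof.
  intros Hay. exists (mkposreal _ (proj2 (Rlt_0_minus _ _) Hay)). simpl.
  intros x Hx Hax. change (Rabs (x - a) < y - a) in Hx. apply Rabs_def2 in Hx. lra.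
Qed.

Lemma at_left_segment b y : y < b -> at_left b (fun x => y <= x /\ x < b).
Proof.
  intros Hyb. exists (mkposreal _ (proj2 (Rlt_0_minus _ _) Hyb)). simpl.
  intros x Hx Hxb. change (Rabs (x - b) < b - y) in Hx. apply Rabs_def2 in Hx. lra.
Qed.

Lemma locally_open_interval a b x : a < x < b -> locally x (fun y => a < y < b).
Proof.
  intros Hx.
  exists (mkposreal _ (Rmin_pos _ _ (proj2 (Rlt_0_minus _ _) (proj1 Hx))
                                    (proj2 (Rlt_0_minus _ _) (proj2 Hx)))).
  simpl. intros y Hy. change (Rabs (y - x) < Rmin (x - a) (b - x)) in Hy. apply Rabs_def2 in Hy.
  pose proof (Rmin_l (x - a) (b - x)). pose proof (Rmin_r (x - a) (b - x)). lra.
Qed.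

Lemma half_line_ends : interval_ends (at_right 0) (Rbar_locally p_infty) (fun x => 0 < x).
Proof.
  split.
  - intros x y z Hx _ Hy. lra.
  - intros x Hx. eapply filter_imp; [|exact (locally_open_interval 0 (x + 1) x ltac:(lra))].
    intros y Hy. lra.
  - intros y Hy. eapply filter_imp; [|exact (at_right_segment 0 y Hy)]. intros x Hx. lra.
  - intros y Hy. exists y. intros x Hx. lra.
Qed.

Lemma unit_interval_ends : interval_ends (at_right (-1)) (at_left 1) (fun x => -1 < x < 1).
Proof.
  split.
  - intros x y z Hx Hz Hy. lra.
  - intros x Hx. now apply locally_open_interval.
  - intros y Hy. eapply filter_imp; [|exact (at_right_segment (-1) y (proj1 Hy))].
    intros x Hx. lra.
  - intros y Hy. eapply filter_imp; [|exact (at_left_segment 1 y (proj2 Hy))].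
    intros x Hx. lra.
Qed.

Definition gamma_integrand (d : nat) (t : R) : R := t ^ d / sqrt t * exp (- t).

(* u^(d - 1/2) = u^d / sqrt u, to match the Rpower in the definitions of Gamma and I_d. *)
Lemma Rpower_half_integer u d : 0 < u -> Rpower u (INR d - / 2) = u ^ d / sqrt u.
Proof.
  intros Hu. replace (INR d - / 2) with (INR d + - (/ 2)) by ring.
  now rewrite Rpower_plus, Rpower_Ropp, Rpower_pow, Rpower_sqrt.
Qed.

Lemma Gamma_of_integral d (G : R) :
  is_RInt_gen (gamma_integrand d) (at_right 0) (Rbar_locally p_infty) G ->
  Gamma (INR d + / 2) = G.
Proof.
  intros HG. unfold Gamma. apply is_RInt_gen_unique.
  eapply is_RInt_gen_ext; [|exact HG].
  eapply filter_imp; [|exact (eventually_segment_in_interval _ _ _ 1 half_line_ends Rlt_0_1)].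
  intros ab Hab t Ht. specialize (Hab t ltac:(lra)). unfold gamma_integrand.
  replace (INR d + / 2 - 1) with (INR d - / 2) by lra. now rewrite Rpower_half_integer.
Qed.

Lemma gamma_integrand_continuous d t : 0 < t -> continuous (gamma_integrand d) t.
Proof.
  intros Ht. apply continuous_of_ex_derive. unfold gamma_integrand. auto_derive.
  pose proof (sqrt_lt_R0 t Ht). repeat split; lra.
Qed.

Lemma gamma_integrand_pos d t : 0 < t -> 0 < gamma_integrand d t.
Proof.
  intros Ht. unfold gamma_integrand. pose proof (exp_pos (- t)).
  apply Rmult_lt_0_compat; [apply Rdiv_lt_0_compat; [now apply pow_lt|now apply sqrt_lt_R0]|lra].
Qed.

(* Gamma(1/2) converges: e^(-t)/sqrt t <= 1/(sqrt t (1 + t)), whose primitive 2 atan (sqrt t)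
   is bounded by pi. *)
Lemma gamma_integral_base :
  exists G, is_RInt_gen (gamma_integrand 0) (at_right 0) (Rbar_locally p_infty) G /\ 0 < G.
Proof.
  apply (improper_integral_exists _ _ _ 1 half_line_ends Rlt_0_1 _
           (fun t => / (sqrt t * (1 + t))) (fun t => 2 * atan (sqrt t)) PI) with (x1 := 2); try lra.
  - intros t Ht. now apply gamma_integrand_continuous.
  - intros t Ht. apply continuous_of_ex_derive. auto_derive. pose proof (sqrt_lt_R0 t Ht).
    assert (0 < sqrt t * (1 + t)) by (apply Rmult_lt_0_compat; lra). repeat split; lra.
  - intros t Ht. split; [now apply gamma_integrand_pos|].
    unfold gamma_integrand. pose proof (sqrt_lt_R0 t Ht). pose proof (exp_ineq1_le t).
    rewrite exp_Ropp. simpl. pose proof (exp_pos t).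
    replace (1 / sqrt t * / exp t) with (/ (sqrt t * exp t)) by (field; lra).
    apply Rinv_le_contravar; [apply Rmult_lt_0_compat; lra|]. nra.
  - intros t Ht. pose proof (sqrt_lt_R0 t Ht). auto_derive; [lra|].
    rewrite Rmult_1_r, sqrt_sqrt by lra. field. lra.
  - intros t _. pose proof (atan_bound (sqrt t)). pose proof PI_RGT_0.
    apply Rabs_le. lra.
Qed.

Lemma power_exp_at_infinity (s : R) : is_lim (fun t => exp (s * ln t - t)) p_infty 0.
Proof.
  eapply is_lim_comp; [apply is_lim_exp_m| |exists 0; intros; discriminate].
  apply (is_lim_ext_loc (fun t => t * (s * (ln t / t) - 1))).
  { exists 0. intros t Ht. field. lra. }
  replace m_infty with (Rbar_mult p_infty (s * 0 - 1)).
  - apply is_lim_mult; [apply is_lim_id| |].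
    + apply (is_lim_minus' _ _ _ (Finite (s * 0)) (Finite 1)); [|apply is_lim_const].
      apply (is_lim_scal_l _ s _ (Finite 0)), is_lim_div_ln_p.
    + simpl. replace (s * 0 - 1) with (-1) by ring. lra.
  - simpl. replace (s * 0 - 1) with (-1) by ring.
    destruct Rle_dec as [h|h]; [exfalso; lra|reflexivity].
Qed.

(* The boundary term t^(d+1/2) e^(-t) of the integration by parts vanishes at infinity. *)
Lemma gamma_boundary_at_infinity d :
  filterlim (fun t => t ^ d * sqrt t * exp (- t)) (Rbar_locally p_infty) (locally 0).
Proof.
  assert (Hlim : is_lim (fun t => t ^ d * sqrt t * exp (- t)) p_infty 0).
  { apply (is_lim_ext_loc (fun t => exp ((INR d + / 2) * ln t - t)));
      [|apply power_exp_at_infinity].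
    exists 0. intros t Ht.
    rewrite <- Rpower_pow, <- Rpower_sqrt by lra. unfold Rpower.
    rewrite <- !exp_plus. f_equal. ring. }
  exact Hlim.
Qed.

Lemma gamma_boundary_derivative d t : 0 < t ->
  is_derive (fun t => t ^ d * sqrt t * exp (- t)) t
    ((INR d + / 2) * gamma_integrand d t - gamma_integrand (S d) t).
Proof.
  intros Ht. auto_derive; [exact Ht|]. unfold gamma_integrand.
  pose proof (sqrt_lt_R0 t Ht) as Hs. pose proof (sqrt_sqrt t (Rlt_le _ _ Ht)) as Hss.
  remember (sqrt t) as r. clear Heqr. set (e := exp (- t)). clearbody e. rewrite <- Hss.
  destruct d as [|d]; simpl pred; rewrite ?S_INR; simpl INR; cbn [pow]; field; lra.
Qed.

Lemma gamma_recursion d (G : R) :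
  is_RInt_gen (gamma_integrand d) (at_right 0) (Rbar_locally p_infty) G ->
  is_RInt_gen (gamma_integrand (S d)) (at_right 0) (Rbar_locally p_infty) ((INR d + / 2) * G).
Proof.
  intros HG.
  assert (Hparts : is_RInt_gen
            (fun t => (INR d + / 2) * gamma_integrand d t - gamma_integrand (S d) t)
            (at_right 0) (Rbar_locally p_infty) (0 - 0)).
  { apply (improper_FTC _ _ _ 1 half_line_ends Rlt_0_1 (fun t => t ^ d * sqrt t * exp (- t))).
    - intros t Ht. now apply gamma_boundary_derivative.
    - intros t Ht. apply continuous_of_ex_derive. unfold gamma_integrand. auto_derive.
      pose proof (sqrt_lt_R0 t Ht). repeat split; lra.
    - apply limit_at_right_of_continuous; [|rewrite sqrt_0; ring].
      apply (continuous_mult (K := R_AbsRing)); [apply (continuous_mult (K := R_AbsRing))|].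
      + apply continuous_of_ex_derive. auto_derive. exact I.
      + apply continuous_sqrt.
      + apply continuous_of_ex_derive. auto_derive. exact I.
    - apply gamma_boundary_at_infinity. }
  apply (is_RInt_gen_scal _ (INR d + / 2)) in HG.
  pose proof (is_RInt_gen_minus _ _ _ _ HG Hparts) as Hdiff.
  replace ((INR d + / 2) * G) with (minus (scal (INR d + / 2) G) (0 - 0))
    by (unfold minus, plus, opp, scal; simpl; unfold mult; simpl; ring).
  eapply is_RInt_gen_ext; [|exact Hdiff].
  apply filter_forall. intros ab t _. unfold minus, plus, opp, scal; simpl; unfold mult; simpl. ring.
Qed.

Lemma gamma_integral_exists d :
  exists G, is_RInt_gen (gamma_integrand d) (at_right 0) (Rbar_locally p_infty) G /\ 0 < G.
Proof.
  induction d as [|d [G [HG HGpos]]]; [exact gamma_integral_base|].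
  exists ((INR d + / 2) * G). split; [now apply gamma_recursion|].
  apply Rmult_lt_0_compat; [pose proof (pos_INR d); lra|exact HGpos].
Qed.

Definition bessel_weight (c : R) (d : nat) (t : R) : R :=
  exp (c * t) * ((1 - t ^ 2) ^ d / sqrt (1 - t ^ 2)).

Lemma bessel_integral_of c d (J : R) :
  is_RInt_gen (bessel_weight c d) (at_right (-1)) (at_left 1) J ->
  RInt_gen (fun t => exp (c * t) * Rpower (1 - t ^ 2) (INR d - / 2)) (at_right (-1)) (at_left 1) = J.
Proof.
  intros HJ. apply is_RInt_gen_unique.
  eapply is_RInt_gen_ext; [|exact HJ].
  eapply filter_imp; [|exact (eventually_segment_in_interval _ _ _ 0 unit_interval_ends ltac:(lra))].
  intros ab Hab t Ht. specialize (Hab t ltac:(lra)). unfold bessel_weight.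
  rewrite Rpower_half_integer by nra. reflexivity.
Qed.

Lemma bessel_weight_continuous c d t : -1 < t < 1 -> continuous (bessel_weight c d) t.
Proof.
  intros Ht. apply continuous_of_ex_derive. unfold bessel_weight. auto_derive.
  assert (Hu : 0 < 1 - t * (t * 1)) by nra. pose proof (sqrt_lt_R0 _ Hu).
  replace (1 + - (t * (t * 1))) with (1 - t * (t * 1)) by ring. repeat split; lra.
Qed.

Lemma bessel_weight_pos c d t : -1 < t < 1 -> 0 < bessel_weight c d t.
Proof.
  intros Ht. unfold bessel_weight. assert (Hu : 0 < 1 - t ^ 2) by nra.
  apply Rmult_lt_0_compat; [apply exp_pos|].
  apply Rdiv_lt_0_compat; [now apply pow_lt|now apply sqrt_lt_R0].
Qed.

(* The endpoint singularity splits: 1/sqrt(1-t^2) <= 1/sqrt(1-t) + 1/sqrt(1+t). *)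
Lemma inv_sqrt_one_minus_sq_le t : -1 < t < 1 ->
  / sqrt (1 - t ^ 2) <= / sqrt (1 - t) + / sqrt (1 + t).
Proof.
  intros Ht.
  replace (1 - t ^ 2) with ((1 - t) * (1 + t)) by ring.
  rewrite sqrt_mult by lra.
  pose proof (sqrt_lt_R0 (1 - t) ltac:(lra)) as Hp. pose proof (sqrt_lt_R0 (1 + t) ltac:(lra)) as Hq.
  pose proof (sqrt_sqrt (1 - t) ltac:(lra)). pose proof (sqrt_sqrt (1 + t) ltac:(lra)).
  set (p := sqrt (1 - t)) in *. set (q := sqrt (1 + t)) in *.
  assert (Hsum : 1 <= p + q) by nra.
  replace (/ p + / q) with ((p + q) / (p * q)) by (field; lra).
  unfold Rdiv. rewrite <- (Rmult_1_l (/ (p * q))) at 1.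
  apply Rmult_le_compat_r; [apply Rlt_le, Rinv_0_lt_compat; nra|exact Hsum].
Qed.

(* The Bessel integral converges, by comparison with
   e^|c| (1/sqrt(1-t) + 1/sqrt(1+t)), whose primitive is bounded on ]-1,1[. *)
Lemma bessel_integral_exists c d :
  exists J, is_RInt_gen (bessel_weight c d) (at_right (-1)) (at_left 1) J /\ 0 < J.
Proof.
  assert (HK : 0 < exp (Rabs c)) by apply exp_pos.
  apply (improper_integral_exists _ _ _ 0 unit_interval_ends ltac:(lra) _
           (fun t => exp (Rabs c) * (/ sqrt (1 - t) + / sqrt (1 + t)))
           (fun t => 2 * exp (Rabs c) * (sqrt (1 + t) - sqrt (1 - t))) (4 * exp (Rabs c))) with (x1 := / 2); try lra.
  - intros t Ht. now apply bessel_weight_continuous.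
  - intros t Ht. apply continuous_of_ex_derive. auto_derive.
    pose proof (sqrt_lt_R0 (1 - t) ltac:(lra)). pose proof (sqrt_lt_R0 (1 + t) ltac:(lra)).
    replace (1 + - t) with (1 - t) by ring. repeat split; lra.
  - intros t Ht. split; [now apply bessel_weight_pos|]. unfold bessel_weight.
    assert (Hu : 0 < 1 - t ^ 2) by nra.
    assert (Hexp : exp (c * t) <= exp (Rabs c)).
    { assert (Hct : c * t <= Rabs c).
      { pose proof (Rle_abs (c * t)) as Hle. rewrite Rabs_mult in Hle.
        assert (Rabs t <= 1) by (apply Rabs_le; lra). pose proof (Rabs_pos c). nra. }
      destruct (Rle_lt_or_eq_dec _ _ Hct) as [Hlt|Heq].
      - apply Rlt_le, exp_increasing, Hlt.
      - rewrite Heq. lra. }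
    assert (Hpow : (1 - t ^ 2) ^ d <= 1).
    { rewrite <- (pow1 d) at 2. apply pow_incr. pose proof (pow2_ge_0 t). lra. }
    pose proof (inv_sqrt_one_minus_sq_le t Ht) as Hsing.
    pose proof (sqrt_lt_R0 _ Hu). pose proof (pow_lt _ d Hu).
    unfold Rdiv. rewrite <- Rmult_assoc.
    apply Rmult_le_compat; [| |nra|exact Hsing].
    + apply Rmult_le_pos; [apply Rlt_le, exp_pos|lra].
    + apply Rlt_le, Rinv_0_lt_compat. lra.
  - intros t Ht.
    pose proof (sqrt_lt_R0 (1 - t) ltac:(lra)). pose proof (sqrt_lt_R0 (1 + t) ltac:(lra)).
    auto_derive; [lra|]. replace (1 + - t) with (1 - t) by ring. field. lra.
  - intros t Ht.
    assert (Hsq : forall u, 0 <= u <= 2 -> 0 <= sqrt u <= 2).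
    { intros u Hu. split; [apply sqrt_pos|].
      rewrite <- (sqrt_square 2) by lra. apply sqrt_le_1_alt. lra. }
    pose proof (Hsq (1 + t) ltac:(lra)). pose proof (Hsq (1 - t) ltac:(lra)).
    apply Rabs_le. split; nra.
Qed.

Lemma bessel_boundary_derivative c d t : -1 < t < 1 ->
  is_derive (fun t => exp (c * t) * ((1 - t ^ 2) ^ d * sqrt (1 - t ^ 2))) t
    (c * bessel_weight c (S d) t - (2 * INR d + 1) * (t * bessel_weight c d t)).
Proof.
  intros Ht. assert (Hu : 0 < 1 - t ^ 2) by nra.
  auto_derive; replace (1 + - (t * (t * 1))) with (1 - t ^ 2) by ring; [lra|].
  unfold bessel_weight.
  pose proof (sqrt_lt_R0 _ Hu) as Hs. pose proof (sqrt_sqrt _ (Rlt_le _ _ Hu)) as Hss.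
  set (u := 1 - t ^ 2) in *. clearbody u. remember (sqrt u) as r. clear Heqr.
  set (e := exp (c * t)). clearbody e. rewrite <- Hss.
  destruct d as [|d]; simpl pred; rewrite ?S_INR; simpl INR; cbn [pow]; field; lra.
Qed.

(* Integration by parts, the boundary term e^(ct) (1-t^2)^(d+1/2) vanishing at +-1:
   the first moment of the weight of order d is c/(2d+1) times the integral of order d+1. *)
Lemma bessel_first_moment c d (J1 : R) :
  is_RInt_gen (bessel_weight c (S d)) (at_right (-1)) (at_left 1) J1 ->
  is_RInt_gen (fun t => t * bessel_weight c d t) (at_right (-1)) (at_left 1)
    (c * J1 / (2 * INR d + 1)).
Proof.
  intros HJ1.
  set (E := fun t => exp (c * t) * ((1 - t ^ 2) ^ d * sqrt (1 - t ^ 2))).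
  assert (HE_cont : forall a, continuous E a).
  { intros a. unfold E. apply (continuous_mult (K := R_AbsRing));
      [|apply (continuous_mult (K := R_AbsRing)); [|apply continuous_sqrt_comp]];
      apply continuous_of_ex_derive; auto_derive; exact I. }
  assert (Hparts : is_RInt_gen
            (fun t => c * bessel_weight c (S d) t - (2 * INR d + 1) * (t * bessel_weight c d t))
            (at_right (-1)) (at_left 1) (0 - 0)).
  { apply (improper_FTC _ _ _ 0 unit_interval_ends ltac:(lra) E).
    - intros t Ht. now apply bessel_boundary_derivative.
    - intros t Ht. apply continuous_of_ex_derive. unfold bessel_weight. auto_derive.
      assert (Hu : 0 < 1 - t * (t * 1)) by nra. pose proof (sqrt_lt_R0 _ Hu).
      replace (1 + - (t * (t * 1))) with (1 - t * (t * 1)) by ring. repeat split; lra.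
    - apply limit_at_right_of_continuous; [apply HE_cont|].
      unfold E. replace (1 - (-1) ^ 2) with 0 by ring. rewrite sqrt_0. ring.
    - apply limit_at_left_of_continuous; [apply HE_cont|].
      unfold E. replace (1 - 1 ^ 2) with 0 by ring. rewrite sqrt_0. ring. }
  assert (Hk : 0 < 2 * INR d + 1) by (pose proof (pos_INR d); lra).
  apply (is_RInt_gen_scal _ c) in HJ1.
  pose proof (is_RInt_gen_minus _ _ _ _ HJ1 Hparts) as Hdiff.
  apply (is_RInt_gen_scal _ (/ (2 * INR d + 1))) in Hdiff.
  replace (c * J1 / (2 * INR d + 1)) with (scal (/ (2 * INR d + 1)) (minus (scal c J1) (0 - 0)))
    by (unfold minus, plus, opp, scal; simpl; unfold mult; simpl; field; lra).
  eapply is_RInt_gen_ext; [|exact Hdiff].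
  apply filter_forall. intros ab t _. unfold minus, plus, opp, scal; simpl; unfold mult; simpl.
  field. lra.
Qed.

(* c J_{d+1} <= (2d+1) J_d, since |t| <= 1 on ]-1,1[. *)
Lemma bessel_integral_recursion c d (J0 J1 : R) :
  is_RInt_gen (bessel_weight c d) (at_right (-1)) (at_left 1) J0 ->
  is_RInt_gen (bessel_weight c (S d)) (at_right (-1)) (at_left 1) J1 ->
  c * J1 <= (2 * INR d + 1) * J0.
Proof.
  intros HJ0 HJ1.
  assert (Hk : 0 < 2 * INR d + 1) by (pose proof (pos_INR d); lra).
  assert (Hsplit : filter_prod (at_right (-1)) (at_left 1)
                     (fun ab => -1 < fst ab <= 0 /\ 0 <= snd ab < 1)).
  { apply (Filter_prod _ _ _ _ _ (at_right_segment (-1) 0 ltac:(lra)) (at_left_segment 1 0 ltac:(lra))).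
    intros a b Ha Hb. simpl. lra. }
  assert (Hnorm : norm (c * J1 / (2 * INR d + 1)) <= J0).
  { apply (RInt_gen_norm (V := R_CompleteNormedModule) (Fa := at_right (-1)) (Fb := at_left 1) (fun t => t * bessel_weight c d t)
             (bessel_weight c d)); [| |now apply bessel_first_moment|exact HJ0];
      eapply filter_imp; try exact Hsplit; simpl; intros [a b] Hab; simpl in *; [lra|].
    intros t Ht. pose proof (bessel_weight_pos c d t ltac:(lra)).
    change (norm (t * bessel_weight c d t)) with (Rabs (t * bessel_weight c d t)).
    rewrite Rabs_mult, (Rabs_pos_eq (bessel_weight c d t)) by lra.
    assert (Rabs t <= 1) by (apply Rabs_le; lra). nra. }
  change (norm (c * J1 / (2 * INR d + 1))) with (Rabs (c * J1 / (2 * INR d + 1))) in Hnorm.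
  pose proof (Rle_abs (c * J1 / (2 * INR d + 1))).
  apply (Rmult_le_reg_r (/ (2 * INR d + 1))); [now apply Rinv_0_lt_compat|].
  replace ((2 * INR d + 1) * J0 * / (2 * INR d + 1)) with J0 by (field; lra).
  unfold Rdiv in *. lra.
Qed.

Lemma besselI_integral_form c d (G J : R) :
  is_RInt_gen (gamma_integrand d) (at_right 0) (Rbar_locally p_infty) G ->
  is_RInt_gen (bessel_weight c d) (at_right (-1)) (at_left 1) J ->
  besselI d c = (c / 2) ^ d / (sqrt PI * G) * J.
Proof.
  intros HG HJ. unfold besselI.
  now rewrite (Gamma_of_integral d G HG), (bessel_integral_of c d J HJ).
Qed.

Lemma besselI_pos c d : 0 < c -> 0 < besselI d c.
Proof.
  intros Hc.
  destruct (gamma_integral_exists d) as [G [HG HGpos]].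
  destruct (bessel_integral_exists c d) as [J [HJ HJpos]].
  rewrite (besselI_integral_form c d G J HG HJ).
  pose proof (sqrt_lt_R0 _ PI_RGT_0).
  apply Rmult_lt_0_compat; [|exact HJpos].
  apply Rdiv_lt_0_compat; [apply pow_lt; lra|now apply Rmult_lt_0_compat].
Qed.

(* I_(d+1)(c) <= I_d(c): combine Gamma(d + 3/2) = (d + 1/2) Gamma(d + 1/2)
   with c J_(d+1) <= (2d+1) J_d. *)
Lemma besselI_succ_le c d : 0 < c -> besselI (S d) c <= besselI d c.
Proof.
  intros Hc.
  destruct (gamma_integral_exists d) as [G [HG HGpos]].
  destruct (bessel_integral_exists c d) as [J0 [HJ0 _]].
  destruct (bessel_integral_exists c (S d)) as [J1 [HJ1 _]].
  rewrite (besselI_integral_form c d G J0 HG HJ0),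
          (besselI_integral_form c (S d) _ J1 (gamma_recursion d G HG) HJ1).
  pose proof (bessel_integral_recursion c d J0 J1 HJ0 HJ1) as Hrec.
  pose proof (sqrt_lt_R0 _ PI_RGT_0). pose proof (pos_INR d).
  set (A := (c / 2) ^ d / (sqrt PI * G)).
  assert (HA : 0 < A).
  { apply Rdiv_lt_0_compat; [apply pow_lt; lra|now apply Rmult_lt_0_compat]. }
  replace ((c / 2) ^ S d / (sqrt PI * ((INR d + / 2) * G)) * J1)
    with (A * (c * J1 / (2 * INR d + 1))) by (unfold A; simpl; field; lra).
  apply Rmult_le_compat_l; [lra|].
  apply (Rmult_le_reg_r (2 * INR d + 1)); [lra|].
  unfold Rdiv. rewrite Rmult_assoc, Rinv_l by lra. lra.
Qed.

Lemma lambda_pos c d : 0 < c -> 0 < lambda c d.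
Proof. intros Hc. apply Rdiv_lt_0_compat; now apply besselI_pos. Qed.

Lemma lambda_succ_le c d : 0 < c -> lambda c (S d) <= lambda c d.
Proof.
  intros Hc. unfold lambda, Rdiv. apply Rmult_le_compat_r.
  - apply Rlt_le, Rinv_0_lt_compat. now apply besselI_pos.
  - now apply besselI_succ_le.
Qed.

Theorem mainTheorem13 (c : R) (hc : 0 < c) :
  9 / (2 * PI ^ 2) *
    Series (fun d => if orb (Nat.eqb d 0) (Nat.eqb (Nat.modulo d 3) 0) then 0
                     else lambda c d / INR d ^ 2)
  >
  4 / PI ^ 2 *
    Series (fun d => if Nat.odd d then lambda c d / INR d ^ 2 else 0).
Proof.
  change (4 / PI ^ 2 * Series (two_arc_term (lambda c))
          < 9 / (2 * PI ^ 2) * Series (three_arc_term (lambda c))).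
  assert (Hineq : 4 * Series (two_arc_term (lambda c)) < 9 / 2 * Series (three_arc_term (lambda c))).
  { apply arc_sums_inequality.
    - intros d. apply Rlt_le. now apply lambda_pos.
    - intros d. now apply lambda_succ_le.
    - now apply lambda_pos. }
  assert (Hpi : 0 < / PI ^ 2) by (apply Rinv_0_lt_compat, pow_lt, PI_RGT_0).
  replace (4 / PI ^ 2) with (/ PI ^ 2 * 4) by (field; apply PI_neq0).
  replace (9 / (2 * PI ^ 2)) with (/ PI ^ 2 * (9 / 2)) by (field; apply PI_neq0).
  rewrite !Rmult_assoc. now apply Rmult_lt_compat_l.
Qed.
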